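(* Let $K$ be a compact Hausdorff space and $B$ the open unit ball of $C(K)$. The following are equivalent: (i) for every $\psi\in H^\infty(B)$, $\hat\psi(\mathcal M_0(B))\subset \mathsf{Cl}_B(\psi,0)$; (ii) for every $f_0\in B$ and every $\psi\in H^\infty(B)$, $\hat\psi(\mathcal M_{f_0}(B))\subset \mathsf{Cl}_B(\psi,f_0)$.
   Context: $H^\infty(B)$ is the uniform algebra of all bounded holomorphic functions on $B$, and $A_u(B)$ its subalgebra of functions uniformly continuous on $B$. For $g_0\in B$, $\mathcal M_{g_0}(B)$ is the set of nonzero multiplicative linear functionals $\tau$ on $H^\infty(B)$ with $\tau(g)=g(g_0)$ for all $g\in A_u(B)$; $\hat\psi(\tau)=\tau(\psi)$. A net $(f_\alpha)$ in $B$ converges to $g_0\in B$ in the polynomial-star topology if $P(f_\alpha)\to P(g_0)$ for every continuous polynomial $P$ on $C(K)$. $\mathsf{Cl}_B(\psi,g_0)$ is the set of all $\lambda\in\mathbb C$ with $\lambda=\lim_\alpha\psi(f_\alpha)$ for some net $(f_\alpha)\subset B$ converging to $g_0$ in the polynomial-star topology. *)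

From Stdlib Require Import Reals List.
Open Scope R_scope.

Definition C : Type := (R * R)%type.
Definition C0 : C := (0, 0).
Definition C1 : C := (1, 0).
Definition Cadd (z w : C) : C := (fst z + fst w, snd z + snd w).
Definition Copp (z : C) : C := (- fst z, - snd z).
Definition Csub (z w : C) : C := Cadd z (Copp w).
Definition Cmul (z w : C) : C :=
  (fst z * fst w - snd z * snd w, fst z * snd w + snd z * fst w).
Definition Cmod (z : C) : R := sqrt (fst z ^ 2 + snd z ^ 2).
Fixpoint Csum (N : nat) (f : nat -> C) : C :=
  match N with O => C0 | S N' => Cadd (Csum N' f) (f N') end.

Record topology (K : Type) := {
  opn : (K -> Prop) -> Prop;
  opn_full : opn (fun _ => True);
  opn_inter : forall U V, opn U -> opn V -> opn (fun x => U x /\ V x);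
  opn_union : forall (I : Type) (F : I -> K -> Prop),
      (forall i, opn (F i)) -> opn (fun x => exists i, F i x)
}.
Arguments opn {K} t _.

Definition top_compact {K : Type} (T : topology K) : Prop :=
  forall (I : Type) (U : I -> K -> Prop),
    (forall i, opn T (U i)) -> (forall k, exists i, U i k) ->
    exists l : list I, forall k, exists i, In i l /\ U i k.

Definition top_hausdorff {K : Type} (T : topology K) : Prop :=
  forall x y : K, x <> y -> exists U V, opn T U /\ opn T V /\ U x /\ V y /\
    (forall z, ~ (U z /\ V z)).

(* Elements of C(K) are functions K -> C satisfying [cont]. *)
Definition cont {K : Type} (T : topology K) (f : K -> C) : Prop :=
  forall k eps, 0 < eps -> exists U, opn T U /\ U k /\
    forall k', U k' -> Cmod (Csub (f k') (f k)) < eps.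

Definition fadd {K : Type} (f g : K -> C) : K -> C := fun k => Cadd (f k) (g k).
Definition fsub {K : Type} (f g : K -> C) : K -> C := fun k => Csub (f k) (g k).
Definition fscal {K : Type} (c : C) (f : K -> C) : K -> C := fun k => Cmul c (f k).
Definition fzero {K : Type} : K -> C := fun _ => C0.

Definition normle {K : Type} (h : K -> C) (r : R) : Prop :=
  forall k, Cmod (h k) <= r.

(* Open unit ball B of C(K) (the sup is attained on a compact space). *)
Definition inB {K : Type} (T : topology K) (f : K -> C) : Prop :=
  cont T f /\ exists r, r < 1 /\ normle f r.

(* Frechet complex differentiability at x, relative to points of B. *)
Definition cbounded_linear {K : Type} (T : topology K) (L : (K -> C) -> C) : Prop :=
  (forall h1 h2, cont T h1 -> cont T h2 -> L (fadd h1 h2) = Cadd (L h1) (L h2)) /\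
  (forall c h, cont T h -> L (fscal c h) = Cmul c (L h)) /\
  (exists M, forall h r, cont T h -> normle h r -> Cmod (L h) <= M * r).

Definition holo_at {K : Type} (T : topology K) (psi : (K -> C) -> C) (x : K -> C) : Prop :=
  exists L, cbounded_linear T L /\
    forall eps, 0 < eps -> exists delta, 0 < delta /\
      forall h r, cont T h -> 0 <= r -> r <= delta -> normle h r ->
        inB T (fadd x h) ->
        Cmod (Csub (Csub (psi (fadd x h)) (psi x)) (L h)) <= eps * r.

(* psi represents an element of H^infty(B) (only its values on B matter). *)
Definition Hinf {K : Type} (T : topology K) (psi : (K -> C) -> C) : Prop :=
  (forall x, inB T x -> holo_at T psi x) /\
  (exists M, forall x, inB T x -> Cmod (psi x) <= M).

Definition Au {K : Type} (T : topology K) (g : (K -> C) -> C) : Prop :=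
  Hinf T g /\
  forall eps, 0 < eps -> exists delta, 0 < delta /\
    forall f1 f2, inB T f1 -> inB T f2 -> normle (fsub f1 f2) delta ->
      Cmod (Csub (g f1) (g f2)) <= eps.

(* tau is a nonzero multiplicative linear functional on H^infty(B)
   (functions agreeing on B are the same element of H^infty(B)),
   and tau(g) = g(g0) for every g in A_u(B). *)
Definition Mfib {K : Type} (T : topology K) (g0 : K -> C)
    (tau : ((K -> C) -> C) -> C) : Prop :=
  (forall psi1 psi2, Hinf T psi1 -> (forall x, inB T x -> psi1 x = psi2 x) ->
      tau psi1 = tau psi2) /\
  (forall psi1 psi2, Hinf T psi1 -> Hinf T psi2 ->
      tau (fun x => Cadd (psi1 x) (psi2 x)) = Cadd (tau psi1) (tau psi2)) /\
  (forall c psi, Hinf T psi -> tau (fun x => Cmul c (psi x)) = Cmul c (tau psi)) /\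
  (forall psi1 psi2, Hinf T psi1 -> Hinf T psi2 ->
      tau (fun x => Cmul (psi1 x) (psi2 x)) = Cmul (tau psi1) (tau psi2)) /\
  (exists psi, Hinf T psi /\ tau psi <> C0) /\
  (forall g, Au T g -> tau g = g g0).

Definition upd {X : Type} (xs : nat -> X) (i : nat) (y : X) : nat -> X :=
  fun j => if Nat.eqb j i then y else xs j.

Fixpoint Rprod (n : nat) (r : nat -> R) : R :=
  match n with O => 1 | S n' => Rprod n' r * r n' end.

(* A is a continuous n-linear form on C(K), acting on the first n entries
   of a sequence of arguments. *)
Definition cmultilinear {K : Type} (T : topology K) (n : nat)
    (A : (nat -> (K -> C)) -> C) : Prop :=
  (forall xs ys, (forall i, (i < n)%nat -> xs i = ys i) -> A xs = A ys) /\
  (forall xs i y z, (forall j, cont T (xs j)) -> cont T y -> cont T z -> (i < n)%nat ->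
      A (upd xs i (fadd y z)) = Cadd (A (upd xs i y)) (A (upd xs i z))) /\
  (forall xs i c y, (forall j, cont T (xs j)) -> cont T y -> (i < n)%nat ->
      A (upd xs i (fscal c y)) = Cmul c (A (upd xs i y))) /\
  (exists M, forall xs rs,
      (forall i, (i < n)%nat -> cont T (xs i) /\ 0 <= rs i /\ normle (xs i) (rs i)) ->
      Cmod (A xs) <= M * Rprod n rs).

Definition cpoly {K : Type} (T : topology K) (P : (K -> C) -> C) : Prop :=
  exists (N : nat) (A : nat -> (nat -> (K -> C)) -> C),
    (forall n, cmultilinear T n (A n)) /\
    forall x, cont T x -> P x = Csum N (fun n => A n (fun _ => x)).

Definition directed {D : Type} (le : D -> D -> Prop) : Prop :=
  (exists d : D, True) /\ (forall a, le a a) /\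
  (forall a b c, le a b -> le b c -> le a c) /\
  (forall a b, exists c, le a c /\ le b c).

Definition net_lim {D : Type} (le : D -> D -> Prop) (z : D -> C) (l : C) : Prop :=
  forall eps, 0 < eps -> exists a0, forall a, le a0 a -> Cmod (Csub (z a) l) < eps.

Definition Cl {K : Type} (T : topology K) (psi : (K -> C) -> C) (g0 : K -> C)
    (lam : C) : Prop :=
  exists (D : Type) (le : D -> D -> Prop) (f : D -> (K -> C)),
    directed le /\ (forall a, inB T (f a)) /\
    (forall P, cpoly T P -> net_lim le (fun a => P (f a)) (P g0)) /\
    net_lim le (fun a => psi (f a)) lam.

(** Implication (ii) => (i) is the special
    case [f0 = 0].  For (i) => (ii) we transport everything along the pointwise Möbius
    automorphism of [B]
        [Phi_a(x)(k) = (x(k) + a(k)) / (1 + conj(a(k)) x(k))],   [Phi_a(0) = a],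
    whose inverse is [Phi_(-a)].  Three transport facts are proved:
    - composition with [Phi_a] maps [H^infty(B)] into itself (a chain rule, using the
      explicit first-order expansion of the scalar Möbius map) and [A_u(B)] into itself
      (the scalar map is uniformly Lipschitz on the closed disc);
    - hence [tau |-> (psi |-> tau (psi o Phi_(-f0)))] sends the fibre over [f0] into the
      fibre over [0];
    - [Phi_a] sends nets converging to [0] in the polynomial-star topology to nets
      converging to [a]: on [B], [Phi_a] is a uniform limit of pointwise polynomial maps
      [x |-> sum_(t<=N) c_t x^t] with continuous coefficients, a continuous multilinear
      form composed with such maps is again a continuous polynomial, and continuous
      multilinear forms are uniformly continuous on bounded sets.
    Given [tau] over [f0], applying (i) to [psi o Phi_(f0)] and the transported [tau]
    yields a net [g_d -> 0]; the net [Phi_(f0)(g_d)] then witnesses (ii). *)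

From Pilot Require Import Defs.
From Stdlib Require Import Reals Lra Lia Psatz FunctionalExtensionality.
From Coquelicot Require Import Coquelicot.
Open Scope R_scope.

Lemma Cmul_Cmult : Cmul = Cmult. Proof. reflexivity. Qed.
Lemma Cadd_Cplus : Cadd = Cplus. Proof. reflexivity. Qed.
Lemma Csub_Cminus : Csub = Cminus. Proof. reflexivity. Qed.
Lemma Copp_Copp : Defs.Copp = Copp. Proof. reflexivity. Qed.
Lemma Cmod_Cmod : Defs.Cmod = Cmod. Proof. reflexivity. Qed.
Lemma C0_RtoC : Defs.C0 = RtoC 0. Proof. reflexivity. Qed.
Lemma C1_RtoC : Defs.C1 = RtoC 1. Proof. reflexivity. Qed.

Ltac to_coquelicot :=
  rewrite ?Cadd_Cplus, ?Csub_Cminus, ?Cmul_Cmult, ?Copp_Copp, ?Cmod_Cmod, ?C0_RtoC, ?C1_RtoC in *.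
Ltac cring := match goal with |- @eq _ ?a ?b => change (@eq C a b) end;
  first [ring | symmetry; ring].

Lemma Cmod_sub_sym (x y : C) : Cmod (x - y) = Cmod (y - x).
Proof. replace (x - y)%C with (- (y - x))%C by ring. apply Cmod_opp. Qed.

Lemma Cmod_sub_le (x y : C) : Cmod (x - y) <= Cmod x + Cmod y.
Proof. unfold Cminus. rewrite <- (Cmod_opp y). apply Cmod_triangle. Qed.

Lemma Cmod_rev (x y : C) : Cmod x - Cmod y <= Cmod (x - y).
Proof. pose proof (Cmod_triangle (x - y) y). replace (x - y + y)%C with x in H by ring. lra. Qed.

Lemma Cmod_pos_neq0 (z : C) : 0 < Cmod z -> z <> RtoC 0.
Proof. intros H E. rewrite E, Cmod_0 in H. lra. Qed.

Lemma pow_le_one x j : 0 <= x <= 1 -> x ^ j <= 1.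
Proof. intros. induction j; simpl; [lra|]. assert (0 <= x ^ j) by (apply pow_le; lra). nra. Qed.

(** ** The scalar Möbius map [z |-> (z + a) / (1 + conj a z)] *)

Definition mpt (a z : C) : C := ((z + a) / (1 + Cconj a * z))%C.

(** The numerator [1 - |a|^2] of its derivative. *)
Definition dil (a : C) : C := (1 - Cconj a * a)%C.

Lemma Cmod_dil (a : C) : Cmod a <= 1 -> Cmod (dil a) <= 2.
Proof.
  intros. unfold dil. eapply Rle_trans; [apply Cmod_sub_le|].
  rewrite Cmod_1, Cmod_mult, Cmod_conj. pose proof (Cmod_ge_0 a). nra.
Qed.

Lemma den_lb (a z : C) ra : Cmod a <= ra -> Cmod z <= 1 -> 1 - ra <= Cmod (1 + Cconj a * z).
Proof.
  intros Ha Hz. pose proof (Cmod_rev 1 (- (Cconj a * z))).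
  replace (1 - - (Cconj a * z))%C with (1 + Cconj a * z)%C in H by ring.
  rewrite Cmod_opp, Cmod_mult, Cmod_conj, Cmod_1 in H.
  pose proof (Cmod_ge_0 a). pose proof (Cmod_ge_0 z). assert (Cmod a * Cmod z <= ra) by nra. lra.
Qed.

Lemma den_neq0 (a z : C) ra : Cmod a <= ra -> ra < 1 -> Cmod z <= 1 -> (1 + Cconj a * z)%C <> RtoC 0.
Proof. intros. apply Cmod_pos_neq0. pose proof (den_lb a z ra H H1). lra. Qed.

Definition mob_radius (ra rz : R) := sqrt (1 - (1 - ra ^ 2) * (1 - rz ^ 2) / 4).

Lemma mob_radius_lt1 ra rz : 0 <= ra < 1 -> 0 <= rz < 1 -> mob_radius ra rz < 1.
Proof.
  intros. unfold mob_radius.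
  assert ((1 - ra ^ 2) * (1 - rz ^ 2) <= 1 * 1) by (apply Rmult_le_compat; nra).
  assert (0 < (1 - ra ^ 2) * (1 - rz ^ 2)) by (apply Rmult_lt_0_compat; nra).
  apply Rlt_le_trans with (sqrt 1); [apply sqrt_lt_1; lra | rewrite sqrt_1; lra].
Qed.

Lemma mpt_norm_identity (a z : C) :
  Cmod (z + a) ^ 2 + (1 - Cmod a ^ 2) * (1 - Cmod z ^ 2) = Cmod (1 + Cconj a * z) ^ 2.
Proof. rewrite !Cmod2_alt. destruct a as [a1 a2], z as [z1 z2]. unfold Re, Im. simpl. ring. Qed.

(** By the identity, [|z + a|^2 = D^2 - (1 - |a|^2)(1 - |z|^2) <= D^2 (1 - k)] with
    [D = |1 + conj a z| <= 2] and [k = (1 - ra^2)(1 - rz^2) / 4]. *)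
Lemma mpt_bound (a z : C) ra rz : Cmod a <= ra -> ra < 1 -> Cmod z <= rz -> rz < 1 ->
  Cmod (mpt a z) <= mob_radius ra rz.
Proof.
  intros Ha Hra Hz Hrz. pose proof (Cmod_ge_0 a). pose proof (Cmod_ge_0 z).
  pose proof (den_lb a z ra Ha ltac:(lra)) as Hlb.
  assert (Hub : Cmod (1 + Cconj a * z) <= 2).
  { eapply Rle_trans; [apply Cmod_triangle|]. rewrite Cmod_mult, Cmod_conj, Cmod_1. nra. }
  unfold mpt. rewrite Cmod_div by (apply (den_neq0 a z ra); lra).
  pose proof (mpt_norm_identity a z) as Hid.
  set (D := Cmod (1 + Cconj a * z)) in *.
  apply Rmult_le_reg_r with D; [lra|]. unfold Rdiv. rewrite Rmult_assoc, Rinv_l, Rmult_1_r by lra.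
  set (k := (1 - ra ^ 2) * (1 - rz ^ 2) / 4).
  assert (Hprod : 0 <= (1 - ra ^ 2) * (1 - rz ^ 2) <= (1 - Cmod a ^ 2) * (1 - Cmod z ^ 2))
    by (split; [apply Rmult_le_pos | apply Rmult_le_compat]; nra).
  assert (Hk : 0 <= k <= 1 / 4).
  { assert ((1 - ra ^ 2) * (1 - rz ^ 2) <= 1 * 1) by (apply Rmult_le_compat; nra). unfold k. lra. }
  assert (Hr2 : mob_radius ra rz ^ 2 = 1 - k).
  { unfold mob_radius. fold k. simpl. rewrite Rmult_1_r. apply sqrt_sqrt. lra. }
  assert (D ^ 2 * k <= 4 * k) by (apply Rmult_le_compat_r; nra).
  assert (Cmod (z + a) ^ 2 <= (mob_radius ra rz * D) ^ 2)
    by (rewrite Rpow_mult_distr, Hr2; unfold k in *; nra).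
  assert (0 <= mob_radius ra rz * D) by (apply Rmult_le_pos; [apply sqrt_pos | lra]).
  pose proof (Cmod_ge_0 (z + a)). nra.
Qed.

Lemma dil_neq0 (a : C) : Cmod a < 1 -> dil a <> RtoC 0.
Proof.
  intros Ha E. assert (Cmod (Cconj a * a) = 1).
  { replace (Cconj a * a)%C with (RtoC 1 - dil a)%C by (unfold dil; ring). rewrite E.
    replace (RtoC 1 - RtoC 0)%C with (RtoC 1) by ring. apply Cmod_1. }
  rewrite Cmod_mult, Cmod_conj in H. pose proof (Cmod_ge_0 a). nra.
Qed.

Lemma mpt_inv (a z : C) : Cmod a < 1 -> Cmod z < 1 -> mpt a (mpt (- a) z) = z.
Proof.
  intros Ha Hz.
  assert (Hw : Cmod (mpt (- a) z) <= 1).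
  { pose proof (mpt_bound (- a) z (Cmod a) (Cmod z)) as Hb. rewrite Cmod_opp in Hb.
    pose proof (mob_radius_lt1 (Cmod a) (Cmod z)). pose proof (Cmod_ge_0 a). pose proof (Cmod_ge_0 z).
    specialize (Hb ltac:(lra) Ha ltac:(lra) Hz). lra. }
  assert (H1 := den_neq0 (- a) z (Cmod a) ltac:(rewrite Cmod_opp; lra) Ha ltac:(lra)).
  assert (H2 := den_neq0 a _ (Cmod a) ltac:(lra) Ha Hw).
  pose proof (dil_neq0 a Ha). unfold mpt, dil in *. rewrite Copp_conj in *.
  revert H1 H2 H. generalize (Cconj a). intros b H1 H2 H0.
  assert (E1 : ((z + - a) / (1 + - b * z) + a)%C = (z * (1 - b * a) / (1 + - b * z))%C)
    by (field; auto).
  assert (E2 : (1 + b * ((z + - a) / (1 + - b * z)))%C = ((1 - b * a) / (1 + - b * z))%C)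
    by (field; auto).
  rewrite E1, E2. field. split; auto.
Qed.

Lemma mpt_opp_self (a : C) : mpt (- a) a = RtoC 0.
Proof. unfold mpt. replace (a + - a)%C with (RtoC 0) by ring. unfold Cdiv. ring. Qed.

Lemma mpt_lipschitz (a z w : C) ra : Cmod a <= ra -> ra < 1 -> Cmod z <= 1 -> Cmod w <= 1 ->
  Cmod (mpt a w - mpt a z) <= 2 / (1 - ra) ^ 2 * Cmod (w - z).
Proof.
  intros Ha Hr Hz Hw.
  pose proof (den_lb a z ra Ha Hz). pose proof (den_lb a w ra Ha Hw).
  assert (E : (mpt a w - mpt a z)%C =
              (dil a * (w - z) / ((1 + Cconj a * z) * (1 + Cconj a * w)))%C).
  { unfold mpt, dil. assert (Hz' := den_neq0 a z ra Ha Hr Hz). assert (Hw' := den_neq0 a w ra Ha Hr Hw).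
    revert Hz' Hw'. generalize (Cconj a). intros b ? ?. field. auto. }
  rewrite E, Cmod_div by (apply Cmult_neq_0; apply (den_neq0 a _ ra); auto).
  rewrite !Cmod_mult. pose proof (Cmod_dil a ltac:(lra)).
  pose proof (Cmod_ge_0 (w - z)). pose proof (Cmod_ge_0 (dil a)).
  assert ((1 - ra) ^ 2 <= Cmod (1 + Cconj a * z) * Cmod (1 + Cconj a * w))
    by (simpl; rewrite Rmult_1_r; apply Rmult_le_compat; lra).
  assert (0 < (1 - ra) ^ 2) by (apply pow_lt; lra).
  unfold Rdiv. apply Rle_trans with (Cmod (dil a) * Cmod (w - z) * / (1 - ra) ^ 2).
  - apply Rmult_le_compat_l; [nra|]. apply Rinv_le_contravar; lra.
  - assert (0 < / (1 - ra) ^ 2) by (apply Rinv_0_lt_compat, pow_lt; lra).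
    assert (Cmod (dil a) * Cmod (w - z) <= 2 * Cmod (w - z)) by nra. nra.
Qed.

(** The derivative of [mpt a] at [z]. *)
Definition dmpt (a z : C) : C := (dil a / (1 + Cconj a * z) ^ 2)%C.

Lemma mpt_expansion (a z w : C) ra : Cmod a <= ra -> ra < 1 -> Cmod z <= 1 -> Cmod w <= 1 ->
  Cmod (mpt a w - mpt a z - dmpt a z * (w - z)) <= 2 / (1 - ra) ^ 3 * Cmod (w - z) ^ 2.
Proof.
  intros Ha Hr Hz Hw.
  pose proof (den_lb a z ra Ha Hz). pose proof (den_lb a w ra Ha Hw).
  assert (Hz' := den_neq0 a z ra Ha Hr Hz). assert (Hw' := den_neq0 a w ra Ha Hr Hw).
  assert (E : (mpt a w - mpt a z - dmpt a z * (w - z))%C =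
     (- dil a * Cconj a * (w - z) ^ 2 / ((1 + Cconj a * z) ^ 2 * (1 + Cconj a * w)))%C).
  { unfold mpt, dmpt, dil. revert Hz' Hw'. generalize (Cconj a). intros b ? ?. simpl. field. auto. }
  rewrite E, Cmod_div by (apply Cmult_neq_0; [apply Cpow_nz|]; auto).
  rewrite !Cmod_mult, !Cmod_pow, Cmod_opp, Cmod_conj. pose proof (Cmod_dil a ltac:(lra)).
  pose proof (Cmod_ge_0 (w - z)). pose proof (Cmod_ge_0 (dil a)). pose proof (Cmod_ge_0 a).
  set (D1 := Cmod (1 + Cconj a * z)) in *. set (D2 := Cmod (1 + Cconj a * w)) in *.
  assert (E3 : (1 - ra) ^ 3 <= D1 ^ 2 * D2).
  { replace ((1 - ra) ^ 3) with ((1 - ra) ^ 2 * (1 - ra)) by ring.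
    apply Rmult_le_compat; [nra | lra | apply pow_incr; lra | lra]. }
  assert (0 < (1 - ra) ^ 3) by (apply pow_lt; lra).
  unfold Rdiv. apply Rle_trans with (Cmod (dil a) * Cmod a * Cmod (w - z) ^ 2 * / (1 - ra) ^ 3).
  - apply Rmult_le_compat_l; [apply Rmult_le_pos; [nra | apply pow_le; lra]|].
    apply Rinv_le_contravar; lra.
  - assert (0 < / (1 - ra) ^ 3) by (apply Rinv_0_lt_compat, pow_lt; lra).
    assert (Cmod (dil a) * Cmod a * Cmod (w - z) ^ 2 <= 2 * Cmod (w - z) ^ 2).
    { apply Rmult_le_compat_r; [apply pow_le; lra | nra]. }
    nra.
Qed.

(** The truncated power series [mpt_series a z N = sum_(t <= N) mpt_coef a t * z^t] of
    [mpt a] at [0]: [mpt a z = a + dil a * sum_(j >= 0) (-conj a)^j z^(j+1)]. *)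
Definition mpt_coef (a : C) (t : nat) : C :=
  match t with O => a | S j => (dil a * (- Cconj a) ^ j)%C end.
Definition mpt_series (a z : C) (N : nat) : C :=
  Csum (S N) (fun t => Cmul (mpt_coef a t) (Cpow z t)).

(** Closed form of the truncation: a geometric sum. *)
Lemma mpt_series_identity a z N :
  ((1 + Cconj a * z) * (mpt_series a z N - a) = dil a * z * (1 - (- Cconj a * z) ^ N))%C.
Proof.
  induction N.
  - unfold mpt_series. simpl. to_coquelicot. cring.
  - change (mpt_series a z (S N))
      with (Cadd (mpt_series a z N) (Cmul (mpt_coef a (S N)) (Cpow z (S N)))).
    to_coquelicot. simpl mpt_coef. rewrite Cpow_S, (Cpow_S (- Cconj a * z)%C), Cpow_mult_l.
    rewrite Cpow_mult_l in IHN.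
    replace ((1 + Cconj a * z) * (mpt_series a z N + dil a * (- Cconj a) ^ N * (z * z ^ N) - a))%C
      with ((1 + Cconj a * z) * (mpt_series a z N - a)
            + (1 + Cconj a * z) * (dil a * (- Cconj a) ^ N * (z * z ^ N)))%C by cring.
    rewrite IHN. cring.
Qed.

Lemma mpt_series_0 a N : mpt_series a (RtoC 0) N = a.
Proof.
  pose proof (mpt_series_identity a (RtoC 0) N) as H.
  replace (mpt_series a (RtoC 0) N)
    with (a + (1 + Cconj a * RtoC 0) * (mpt_series a (RtoC 0) N - a))%C by cring.
  rewrite H. cring.
Qed.

Lemma mpt_series_error a z N ra : Cmod a <= ra -> ra < 1 -> Cmod z <= 1 ->
  Cmod (mpt a z - mpt_series a z N) <= 2 * ra ^ N / (1 - ra).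
Proof.
  intros Ha Hr Hz. pose proof (den_lb a z ra Ha Hz).
  assert (Hnz := den_neq0 a z ra Ha Hr Hz).
  assert (E : (mpt a z - mpt_series a z N)%C =
              (dil a * z * (- Cconj a * z) ^ N / (1 + Cconj a * z))%C).
  { replace (mpt_series a z N)
      with (a + ((1 + Cconj a * z) * (mpt_series a z N - a)) / (1 + Cconj a * z))%C at 1
      by (field; auto).
    rewrite mpt_series_identity. unfold mpt, dil. field. auto. }
  rewrite E, Cmod_div by auto. rewrite !Cmod_mult, Cmod_pow, Cmod_mult, Cmod_opp, Cmod_conj.
  pose proof (Cmod_dil a ltac:(lra)). pose proof (Cmod_ge_0 a). pose proof (Cmod_ge_0 z).
  pose proof (Cmod_ge_0 (dil a)).
  assert (Hp : (Cmod a * Cmod z) ^ N <= ra ^ N) by (apply pow_incr; split; nra).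
  assert (0 <= (Cmod a * Cmod z) ^ N) by (apply pow_le; nra).
  unfold Rdiv. apply Rmult_le_compat;
    [apply Rmult_le_pos; [nra | auto] | apply Rlt_le, Rinv_0_lt_compat; lra | |
     apply Rinv_le_contravar; lra].
  replace (2 * ra ^ N) with (2 * 1 * ra ^ N) by ring.
  apply Rmult_le_compat; auto; [nra|]. apply Rmult_le_compat; auto.
Qed.

Section Continuity.
Context {K : Type} (T : topology K).

Lemma cont_const (c : C) : cont T (fun _ => c).
Proof.
  intros k eps He. exists (fun _ => True). split; [apply opn_full|]. split; auto.
  intros. to_coquelicot. replace (c - c)%C with (RtoC 0) by ring. rewrite Cmod_0. lra.
Qed.

Lemma cont_op1 (op : C -> C) f :
  (forall z eps, 0 < eps -> exists d, 0 < d /\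
     forall z', Cmod (z' - z) < d -> Cmod (op z' - op z) < eps) ->
  cont T f -> cont T (fun k => op (f k)).
Proof.
  intros Hop Hf k eps He.
  destruct (Hop (f k) eps He) as [d [Hd H]]. destruct (Hf k d Hd) as [U [HU [HUk HU']]].
  exists U. split; [auto|]. split; [auto|]. intros k' H1. to_coquelicot. apply H, HU', H1.
Qed.

Lemma cont_op2 (op : C -> C -> C) f g :
  (forall z w eps, 0 < eps -> exists d, 0 < d /\ forall z' w',
      Cmod (z' - z) < d -> Cmod (w' - w) < d -> Cmod (op z' w' - op z w) < eps) ->
  cont T f -> cont T g -> cont T (fun k => op (f k) (g k)).
Proof.
  intros Hop Hf Hg k eps He.
  destruct (Hop (f k) (g k) eps He) as [d [Hd H]].
  destruct (Hf k d Hd) as [U [HU [HUk HU']]]. destruct (Hg k d Hd) as [V [HV [HVk HV']]].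
  exists (fun x => U x /\ V x). split; [apply opn_inter; auto|]. split; [auto|].
  intros k' [H1 H2]. to_coquelicot. apply H; [apply HU' | apply HV']; auto.
Qed.

Lemma cont_add f g : cont T f -> cont T g -> cont T (fun k => (f k + g k)%C).
Proof.
  apply cont_op2. intros z w eps He. exists (eps / 2). split; [lra|].
  intros z' w' H1 H2. replace (z' + w' - (z + w))%C with ((z' - z) + (w' - w))%C by ring.
  eapply Rle_lt_trans; [apply Cmod_triangle|]. lra.
Qed.

Lemma cont_mul f g : cont T f -> cont T g -> cont T (fun k => (f k * g k)%C).
Proof.
  apply cont_op2. intros z w eps He.
  set (m := Cmod z + Cmod w + 2).
  pose proof (Cmod_ge_0 z). pose proof (Cmod_ge_0 w).
  assert (Hm : 0 < m) by (unfold m; lra).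
  set (d := Rmin 1 (eps / m)).
  assert (Hd1 : d <= 1) by apply Rmin_l. assert (Hd2 : d <= eps / m) by apply Rmin_r.
  assert (Hd : 0 < d) by (apply Rmin_case; [lra | apply Rdiv_lt_0_compat; lra]).
  exists d. split; [auto|]. intros z' w' H1 H2.
  replace (z' * w' - z * w)%C with (z' * (w' - w) + w * (z' - z))%C by ring.
  eapply Rle_lt_trans; [apply Cmod_triangle|]. rewrite !Cmod_mult.
  assert (Hz' : Cmod z' <= Cmod z + 1) by (pose proof (Cmod_rev z' z); lra).
  pose proof (Cmod_ge_0 z'). pose proof (Cmod_ge_0 (w' - w)). pose proof (Cmod_ge_0 (z' - z)).
  assert (Cmod z' * Cmod (w' - w) + Cmod w * Cmod (z' - z) <= (Cmod z + 1 + Cmod w) * d).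
  { assert (Cmod z' * Cmod (w' - w) <= (Cmod z + 1) * d) by (apply Rmult_le_compat; lra).
    assert (Cmod w * Cmod (z' - z) <= Cmod w * d) by (apply Rmult_le_compat_l; lra). lra. }
  assert ((Cmod z + 1 + Cmod w) * d <= (Cmod z + 1 + Cmod w) * (eps / m))
    by (apply Rmult_le_compat_l; lra).
  assert ((Cmod z + 1 + Cmod w) * (eps / m) < eps).
  { apply Rmult_lt_reg_r with m; [lra|]. unfold m. field_simplify; lra. }
  lra.
Qed.

Lemma cont_opp f : cont T f -> cont T (fun k => (- f k)%C).
Proof.
  apply cont_op1. intros z eps He. exists eps. split; auto. intros z' H.
  replace (- z' - - z)%C with (- (z' - z))%C by ring. rewrite Cmod_opp. auto.
Qed.

Lemma cont_conj f : cont T f -> cont T (fun k => Cconj (f k)).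
Proof.
  apply cont_op1. intros z eps He. exists eps. split; auto. intros z' H.
  rewrite <- Cminus_conj, Cmod_conj. auto.
Qed.

Lemma cont_inv f m : 0 < m -> (forall k, m <= Cmod (f k)) -> cont T f -> cont T (fun k => (/ f k)%C).
Proof.
  intros Hm Hb Hf k eps He.
  destruct (Hf k (eps * m * m)) as [U [HU [HUk HU']]]; [apply Rmult_lt_0_compat; nra|].
  exists U. split; [auto|]. split; [auto|]. intros k' Hk'. specialize (HU' k' Hk'). to_coquelicot.
  pose proof (Hb k). pose proof (Hb k').
  assert (H1 : f k <> RtoC 0) by (apply Cmod_pos_neq0; lra).
  assert (H2 : f k' <> RtoC 0) by (apply Cmod_pos_neq0; lra).
  replace (/ f k' - / f k)%C with ((f k - f k') / (f k' * f k))%C by (field; auto).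
  rewrite Cmod_div by (apply Cmult_neq_0; auto). rewrite Cmod_mult, Cmod_sub_sym.
  apply Rmult_lt_reg_r with (Cmod (f k') * Cmod (f k)); [nra|].
  unfold Rdiv. rewrite Rmult_assoc, Rinv_l, Rmult_1_r by nra.
  apply Rlt_le_trans with (eps * m * m); auto. rewrite Rmult_assoc. apply Rmult_le_compat_l; nra.
Qed.

Lemma cont_pow f p : cont T f -> cont T (fun k => Cpow (f k) p).
Proof.
  intros Hf. induction p; simpl; [apply cont_const|].
  apply (cont_mul f (fun k => Cpow (f k) p)); auto.
Qed.

Lemma cont_fsub f g : cont T f -> cont T g -> cont T (fsub f g).
Proof.
  intros. unfold fsub, Csub, Cadd.
  apply (cont_add f (fun k => Defs.Copp (g k))); auto. apply cont_opp; auto.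
Qed.

End Continuity.

Definition fmul {K : Type} (f g : K -> C) : K -> C := fun k => (f k * g k)%C.
Definition fneg {K : Type} (f : K -> C) : K -> C := fun k => (- f k)%C.

Lemma cont_fmul {K : Type} (T : topology K) f g : cont T f -> cont T g -> cont T (fmul f g).
Proof. apply cont_mul. Qed.

(** ** The ball [B] and its Möbius automorphisms *)

Section Ball.
Context {K : Type} (T : topology K).

Lemma inB_radius f : inB T f -> exists r, 0 <= r < 1 /\ forall k, Cmod (f k) <= r.
Proof.
  intros [_ [r [Hr Hn]]]. exists (Rmax 0 r). split.
  - split; [apply Rmax_l | apply Rmax_lub_lt; lra].
  - intro k. eapply Rle_trans; [apply (Hn k) | apply Rmax_r].
Qed.

Lemma inB_intro f r : cont T f -> r < 1 -> (forall k, Cmod (f k) <= r) -> inB T f.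
Proof. intros. split; auto. exists r. split; auto. Qed.

Lemma inB_cont f : inB T f -> cont T f.
Proof. intros [H _]; auto. Qed.

Lemma inB_le1 f : inB T f -> forall k, Cmod (f k) <= 1.
Proof. intros Hf. destruct (inB_radius f Hf) as [r [Hr Hn]]. intro k. specialize (Hn k). lra. Qed.

Lemma inB_zero : inB T fzero.
Proof.
  apply inB_intro with 0; [apply cont_const | lra |].
  intro k. unfold fzero. to_coquelicot. rewrite Cmod_0. lra.
Qed.

Lemma inB_fneg a : inB T a -> inB T (fneg a).
Proof.
  intros Ha. destruct (inB_radius a Ha) as [r [Hr Hn]].
  apply inB_intro with r; [apply cont_opp, inB_cont; auto | lra |].
  intro k. unfold fneg. rewrite Cmod_opp. auto.
Qed.

Definition mob (a x : K -> C) : K -> C := fun k => mpt (a k) (x k).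
Definition dmob (a x : K -> C) : K -> C := fun k => dmpt (a k) (x k).

Lemma cont_den a x ra : cont T a -> cont T x -> ra < 1 -> (forall k, Cmod (a k) <= ra) ->
  (forall k, Cmod (x k) <= 1) ->
  cont T (fun k => / (1 + Cconj (a k) * x k))%C /\
  cont T (fun k => / (1 + Cconj (a k) * x k) ^ 2)%C.
Proof.
  intros Ha Hx Hr Hak Hxk.
  assert (HD : cont T (fun k => 1 + Cconj (a k) * x k)%C).
  { apply (cont_add T (fun _ => RtoC 1) (fun k => Cconj (a k) * x k)%C); [apply cont_const|].
    apply (cont_mul T (fun k => Cconj (a k)) x); auto. apply cont_conj; auto. }
  split.
  - apply cont_inv with (1 - ra); [lra | intro k; apply den_lb; auto | auto].
  - apply cont_inv with ((1 - ra) ^ 2); [apply pow_lt; lra | | apply cont_pow; auto].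
    intro k. rewrite Cmod_pow. apply pow_incr. split; [lra | apply den_lb; auto].
Qed.

Lemma cont_dil a : cont T a -> cont T (fun k => dil (a k)).
Proof.
  intros Ha. unfold dil, Cminus.
  apply (cont_add T (fun _ => RtoC 1) (fun k => - (Cconj (a k) * a k))%C); [apply cont_const|].
  apply (cont_opp T (fun k => Cconj (a k) * a k)%C).
  apply (cont_mul T (fun k => Cconj (a k)) a); auto. apply cont_conj; auto.
Qed.

Lemma cont_mob a x ra : cont T a -> cont T x -> ra < 1 -> (forall k, Cmod (a k) <= ra) ->
  (forall k, Cmod (x k) <= 1) -> cont T (mob a x).
Proof.
  intros Ha Hx Hr Hak Hxk. unfold mob, mpt, Cdiv.
  apply (cont_mul T (fun k => x k + a k)%C (fun k => / (1 + Cconj (a k) * x k))%C).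
  - apply cont_add; auto.
  - apply (cont_den a x ra); auto.
Qed.

Lemma cont_dmob a x ra : cont T a -> cont T x -> ra < 1 -> (forall k, Cmod (a k) <= ra) ->
  (forall k, Cmod (x k) <= 1) -> cont T (dmob a x).
Proof.
  intros Ha Hx Hr Hak Hxk. unfold dmob, dmpt, Cdiv.
  apply (cont_mul T (fun k => dil (a k)) (fun k => / (1 + Cconj (a k) * x k) ^ 2)%C).
  - apply cont_dil; auto.
  - apply (cont_den a x ra); auto.
Qed.

Lemma dmob_bound a x ra : 0 <= ra < 1 -> (forall k, Cmod (a k) <= ra) ->
  (forall k, Cmod (x k) <= 1) -> forall k, Cmod (dmob a x k) <= 2 / (1 - ra) ^ 2.
Proof.
  intros Hr Hak Hxk k. unfold dmob, dmpt. pose proof (den_lb (a k) (x k) ra (Hak k) (Hxk k)).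
  rewrite Cmod_div by (apply Cpow_nz, (den_neq0 _ _ ra); auto; lra). rewrite Cmod_pow.
  pose proof (Cmod_dil (a k) ltac:(specialize (Hak k); lra)).
  unfold Rdiv. apply Rmult_le_compat;
    [apply Cmod_ge_0 | apply Rlt_le, Rinv_0_lt_compat, pow_lt; lra | auto |].
  apply Rinv_le_contravar; [apply pow_lt; lra | apply pow_incr; lra].
Qed.

Lemma inB_mob a x : inB T a -> inB T x -> inB T (mob a x).
Proof.
  intros Ha Hx.
  destruct (inB_radius a Ha) as [ra [Hra Hna]]. destruct (inB_radius x Hx) as [rx [Hrx Hnx]].
  apply inB_intro with (mob_radius ra rx).
  - apply cont_mob with ra; auto using inB_cont, inB_le1; lra.
  - apply mob_radius_lt1; auto.
  - intro k. apply mpt_bound; auto; lra.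
Qed.

Lemma mob_inv a x : inB T a -> inB T x -> mob a (mob (fneg a) x) = x.
Proof.
  intros Ha Hx. destruct (inB_radius a Ha) as [ra [Hra Hna]].
  destruct (inB_radius x Hx) as [rx [Hrx Hnx]].
  apply functional_extensionality. intro k.
  apply mpt_inv; [specialize (Hna k) | specialize (Hnx k)]; lra.
Qed.

Lemma mob_opp_self a : mob (fneg a) a = fzero.
Proof. apply functional_extensionality. intro k. apply mpt_opp_self. Qed.

End Ball.

(** ** Composition with [Phi_a] preserves [H^infty(B)] and [A_u(B)] *)

Section Transport.
Context {K : Type} (T : topology K).

Lemma cbounded_linear_mul L d Cd : cbounded_linear T L -> cont T d ->
  (forall k, Cmod (d k) <= Cd) -> cbounded_linear T (fun h => L (fmul d h)).
Proof.
  intros [HLadd [HLsc [ML HML]]] Hd Hdb. split; [|split].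
  - intros h1 h2 H1 H2. rewrite <- HLadd by (apply cont_fmul; auto).
    f_equal. apply functional_extensionality. intro k. unfold fmul, fadd. to_coquelicot. cring.
  - intros c h H1. rewrite <- HLsc by (apply cont_fmul; auto).
    f_equal. apply functional_extensionality. intro k. unfold fmul, fscal. to_coquelicot. cring.
  - exists (ML * Cd). intros h r H1 H2. rewrite Rmult_assoc. apply HML; [apply cont_fmul; auto|].
    intro k. unfold fmul. to_coquelicot. rewrite Cmod_mult.
    apply Rmult_le_compat; auto using Cmod_ge_0.
Qed.

Lemma cbounded_linear_pos_bound L : cbounded_linear T L ->
  exists M, 0 < M /\ forall h r, cont T h -> 0 <= r -> normle h r -> Cmod (L h) <= M * r.
Proof.
  intros [_ [_ [ML HML]]]. exists (Rabs ML + 1). split; [pose proof (Rabs_pos ML); lra|].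
  intros h r Hh Hr Hn. eapply Rle_trans; [apply (HML h r Hh Hn)|].
  apply Rmult_le_compat_r; [auto | pose proof (Rle_abs ML); lra].
Qed.

Lemma two_step_delta c1 c2 d1 eps : 0 < c1 -> 0 < c2 -> 0 < d1 -> 0 < eps ->
  exists delta, 0 < delta /\ c1 * delta <= d1 /\ c2 * delta <= eps / 2.
Proof.
  intros. exists (Rmin (d1 / c1) (eps / (2 * c2))).
  split; [apply Rmin_case; apply Rdiv_lt_0_compat; lra | split].
  - apply Rle_trans with (c1 * (d1 / c1)); [apply Rmult_le_compat_l; [lra | apply Rmin_l]|].
    right. field. lra.
  - apply Rle_trans with (c2 * (eps / (2 * c2))); [apply Rmult_le_compat_l; [lra | apply Rmin_r]|].
    right. field. lra.
Qed.

(** Chain rule: if [Phi] has the first-order expansion [Phi(x+h) = Phi(x) + d h + O(|h|^2)]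
    on [B], with [d] a bounded continuous multiplier, and [psi] is differentiable at
    [Phi x], then [psi o Phi] is differentiable at [x], with derivative [h |-> L (d h)]. *)
Lemma holo_at_comp psi Phi x d Cd Cr : 0 < Cd -> 0 < Cr -> cont T d ->
  (forall k, Cmod (d k) <= Cd) ->
  (forall h r, cont T h -> 0 <= r -> normle h r -> inB T (fadd x h) ->
     let D := fsub (Phi (fadd x h)) (Phi x) in
     cont T D /\ inB T (Phi (fadd x h)) /\ normle D (Cd * r) /\
     normle (fsub D (fmul d h)) (Cr * r ^ 2)) ->
  holo_at T psi (Phi x) -> holo_at T (fun y => psi (Phi y)) x.
Proof.
  intros HCd HCr Hdc Hdb HPhi [L [HLlin HL]].
  exists (fun h => L (fmul d h)). split; [apply cbounded_linear_mul with Cd; auto|].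
  destruct (cbounded_linear_pos_bound L HLlin) as [M [HM HML]]. destruct HLlin as [HLadd _].
  intros eps Heps.
  destruct (HL (eps / (2 * Cd))) as [d1 [Hd1 HL1]]; [apply Rdiv_lt_0_compat; lra|].
  (* [delta] makes [D] small enough for [HL1] and its quadratic part cost [eps r / 2] *)
  destruct (two_step_delta Cd (M * Cr) d1 eps) as [delta [Hdelta [Hdelta1 Hdelta2]]]; try nra.
  exists delta. split; [auto|].
  intros h r Hhc Hr0 Hrd Hn HB.
  destruct (HPhi h r Hhc Hr0 Hn HB) as [HDc [HPB [HDn HRn]]].
  set (D := fsub (Phi (fadd x h)) (Phi x)) in *.
  assert (HPD : fadd (Phi x) D = Phi (fadd x h)).
  { apply functional_extensionality. intro k. unfold D, fadd, fsub. to_coquelicot. cring. }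
  assert (Hlin := HL1 D (Cd * r) HDc ltac:(nra) ltac:(nra) HDn ltac:(rewrite HPD; auto)).
  rewrite HPD in Hlin.
  assert (HRc : cont T (fsub D (fmul d h))) by (apply cont_fsub; auto; apply cont_fmul; auto).
  assert (Hsplit : L D = Cadd (L (fmul d h)) (L (fsub D (fmul d h)))).
  { rewrite <- HLadd by (auto; apply cont_fmul; auto). f_equal.
    apply functional_extensionality. intro k. unfold fadd, fsub. to_coquelicot. cring. }
  assert (Hquad : Cmod (L (fsub D (fmul d h))) <= eps / 2 * r).
  { assert (Hr2 : 0 <= Cr * r ^ 2) by (apply Rmult_le_pos; [lra | apply pow_le; lra]).
    eapply Rle_trans; [apply (HML _ _ HRc Hr2 HRn)|].
    replace (M * (Cr * r ^ 2)) with ((M * Cr * r) * r) by ring. apply Rmult_le_compat_r; auto.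
    apply Rle_trans with (M * Cr * delta); [apply Rmult_le_compat_l; nra | lra]. }
  rewrite Hsplit in Hlin. to_coquelicot.
  replace (psi (Phi (fadd x h)) - psi (Phi x) - L (fmul d h))%C
    with ((psi (Phi (fadd x h)) - psi (Phi x) - (L (fmul d h) + L (fsub D (fmul d h))))
          + L (fsub D (fmul d h)))%C by ring.
  eapply Rle_trans; [apply Cmod_triangle|].
  assert (eps / (2 * Cd) * (Cd * r) = eps / 2 * r) by (field; lra). nra.
Qed.

Lemma mob_expansion a x h r ra : 0 <= ra < 1 -> (forall k, Cmod (a k) <= ra) ->
  inB T x -> inB T (fadd x h) -> normle h r ->
  normle (fsub (mob a (fadd x h)) (mob a x)) (2 / (1 - ra) ^ 2 * r) /\
  normle (fsub (fsub (mob a (fadd x h)) (mob a x)) (fmul (dmob a x) h)) (2 / (1 - ra) ^ 3 * r ^ 2).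
Proof.
  intros Hra Hna Hx Hxh Hn.
  assert (Hh : forall k, h k = (fadd x h k - x k)%C).
  { intro k. unfold fadd. to_coquelicot. cring. }
  assert (Hhr : forall k, Cmod (fadd x h k - x k) <= r) by (intro k; rewrite <- Hh; apply Hn).
  pose proof (inB_le1 T x Hx) as Hx1. pose proof (inB_le1 T _ Hxh) as Hxh1.
  split; intro k; unfold fsub, fmul, mob, dmob; to_coquelicot.
  - eapply Rle_trans; [apply (mpt_lipschitz _ _ _ ra); auto; lra|].
    apply Rmult_le_compat_l; [apply Rlt_le, Rdiv_lt_0_compat; [lra | apply pow_lt; lra] | auto].
  - rewrite (Hh k).
    eapply Rle_trans; [apply (mpt_expansion _ _ _ ra); auto; lra|].
    apply Rmult_le_compat_l; [apply Rlt_le, Rdiv_lt_0_compat; [lra | apply pow_lt; lra]|].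
    apply pow_incr. split; [apply Cmod_ge_0 | auto].
Qed.

Lemma Hinf_mob a psi : inB T a -> Hinf T psi -> Hinf T (fun x => psi (mob a x)).
Proof.
  intros Ha [Hh [M HM]]. split; [| exists M; intros x Hx; apply HM, inB_mob; auto].
  intros x Hx. destruct (inB_radius T a Ha) as [ra [Hra Hna]].
  pose proof (inB_cont T a Ha). pose proof (inB_le1 T x Hx).
  apply (holo_at_comp psi (mob a) x (dmob a x) (2 / (1 - ra) ^ 2) (2 / (1 - ra) ^ 3));
    try (apply Rdiv_lt_0_compat; [lra | apply pow_lt; lra]).
  - apply cont_dmob with ra; auto using inB_cont; lra.
  - apply dmob_bound; auto.
  - intros h r Hhc Hr0 Hn HB. destruct (mob_expansion a x h r ra Hra Hna Hx HB Hn) as [H1 H2].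
    split; [| split; [apply inB_mob; auto | auto]].
    apply cont_fsub; apply cont_mob with ra; auto using inB_cont; try lra. apply (inB_le1 T _ HB).
  - apply Hh, inB_mob; auto.
Qed.

Lemma Au_mob a g : inB T a -> Au T g -> Au T (fun x => g (mob a x)).
Proof.
  intros Ha [Hg Hu]. split; [apply Hinf_mob; auto|].
  destruct (inB_radius T a Ha) as [ra [Hra Hna]].
  assert (Hc : 0 < (1 - ra) ^ 2) by (apply pow_lt; lra).
  intros eps Heps. destruct (Hu eps Heps) as [dg [Hdg Hug]].
  exists (dg * (1 - ra) ^ 2 / 2). split; [apply Rdiv_lt_0_compat; nra|].
  intros f1 f2 H1 H2 Hn. apply Hug; try apply inB_mob; auto.
  intro k. specialize (Hn k). unfold fsub, mob in *. to_coquelicot.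
  eapply Rle_trans; [apply (mpt_lipschitz _ _ _ ra); [auto | lra | apply (inB_le1 T); auto ..]|].
  apply Rle_trans with (2 / (1 - ra) ^ 2 * (dg * (1 - ra) ^ 2 / 2)).
  - apply Rmult_le_compat_l; auto. apply Rlt_le, Rdiv_lt_0_compat; lra.
  - right. field. lra.
Qed.

Lemma Mfib_mob f0 tau : inB T f0 -> Mfib T f0 tau ->
  Mfib T fzero (fun psi => tau (fun x => psi (mob (fneg f0) x))).
Proof.
  intros Hf0 [Hwd [Hadd [Hsc [Hmul [[psi [Hpsi Hne]] Hev]]]]].
  assert (Hn : inB T (fneg f0)) by (apply inB_fneg; auto).
  repeat split.
  - intros p1 p2 Hp E. apply Hwd; [apply Hinf_mob; auto|]. intros x Hx. apply E, inB_mob; auto.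
  - intros p1 p2 Hp1 Hp2.
    apply (Hadd (fun x => p1 (mob (fneg f0) x)) (fun x => p2 (mob (fneg f0) x))); apply Hinf_mob; auto.
  - intros c p Hp. apply (Hsc c (fun x => p (mob (fneg f0) x))), Hinf_mob; auto.
  - intros p1 p2 Hp1 Hp2.
    apply (Hmul (fun x => p1 (mob (fneg f0) x)) (fun x => p2 (mob (fneg f0) x))); apply Hinf_mob; auto.
  - exists (fun x => psi (mob f0 x)). split; [apply Hinf_mob; auto|].
    rewrite <- (Hwd psi); auto. intros x Hx. rewrite (mob_inv T); auto.
  - intros g Hg. rewrite (Hev (fun x => g (mob (fneg f0) x))) by (apply Au_mob; auto).
    rewrite mob_opp_self. reflexivity.
Qed.

End Transport.

(** ** Continuous multilinear forms on [C(K)] *)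

Lemma upd_eq {X} (xs : nat -> X) i y : upd xs i y i = y.
Proof. unfold upd. rewrite Nat.eqb_refl. auto. Qed.

Lemma upd_neq {X} (xs : nat -> X) i y j : j <> i -> upd xs i y j = xs j.
Proof. intros. unfold upd. destruct (Nat.eqb_spec j i); [lia | auto]. Qed.

Lemma upd_upd {X} (xs : nat -> X) i y z : upd (upd xs i y) i z = upd xs i z.
Proof. apply functional_extensionality. intro j. unfold upd. destruct (Nat.eqb j i); auto. Qed.

Lemma upd_comm {X} (xs : nat -> X) i j y z : i <> j -> upd (upd xs i y) j z = upd (upd xs j z) i y.
Proof.
  intros. apply functional_extensionality. intro l. unfold upd.
  destruct (Nat.eqb_spec l j), (Nat.eqb_spec l i); auto; lia.
Qed.

Lemma upd_id {X} (xs : nat -> X) i : upd xs i (xs i) = xs.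
Proof.
  apply functional_extensionality. intro l. unfold upd. destruct (Nat.eqb_spec l i); subst; auto.
Qed.

Lemma Rprod_ext n r r' : (forall i, (i < n)%nat -> r i = r' i) -> Rprod n r = Rprod n r'.
Proof.
  induction n; simpl; intros; auto. rewrite IHn by (intros; apply H; lia). rewrite H by lia. auto.
Qed.

Definition rcons (c : R) (rs : nat -> R) : nat -> R := fun i => match i with O => c | S i' => rs i' end.

Lemma Rprod_cons n c rs : Rprod (S n) (rcons c rs) = c * Rprod n rs.
Proof. induction n; simpl in *; [ring|]. rewrite IHn. ring. Qed.

Lemma Rprod_upd_mul n rs i t : (i < n)%nat -> Rprod n (upd rs i (rs i * t)) = Rprod n rs * t.
Proof.
  induction n; intros Hi; [lia|]. simpl. destruct (Nat.eq_dec i n).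
  - subst. rewrite upd_eq, (Rprod_ext n _ rs) by (intros; apply upd_neq; lia). ring.
  - rewrite IHn, upd_neq by lia. ring.
Qed.

Lemma Rprod_const n c : Rprod n (fun _ => c) = c ^ n.
Proof. induction n; simpl; auto. rewrite IHn. ring. Qed.

Lemma Rprod_upd_const n i rho v : (i < n)%nat -> Rprod n (upd (fun _ => rho) i v) = v * rho ^ (n - 1).
Proof.
  induction n; intros Hi; [lia|]. simpl. destruct (Nat.eq_dec i n).
  - subst. rewrite upd_eq, (Rprod_ext n _ (fun _ => rho)) by (intros; apply upd_neq; lia).
    rewrite Rprod_const, Nat.sub_0_r. ring.
  - rewrite IHn, upd_neq, Nat.sub_0_r by lia. destruct n; [lia|]. simpl. rewrite Nat.sub_0_r. ring.
Qed.

Definition cons_f {K : Type} (c : K -> C) (zs : nat -> K -> C) : nat -> K -> C :=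
  fun i => match i with O => c | S i' => zs i' end.

Lemma cons_f_upd {K : Type} (c : K -> C) zs i w : cons_f c (upd zs i w) = upd (cons_f c zs) (S i) w.
Proof. apply functional_extensionality. intro j. destruct j; reflexivity. Qed.

Lemma fmul_fadd_l {K : Type} (y z w : K -> C) : fmul (fadd y z) w = fadd (fmul y w) (fmul z w).
Proof. apply functional_extensionality. intro k. unfold fmul, fadd. to_coquelicot. cring. Qed.
Lemma fmul_fadd_r {K : Type} (y z w : K -> C) : fmul w (fadd y z) = fadd (fmul w y) (fmul w z).
Proof. apply functional_extensionality. intro k. unfold fmul, fadd. to_coquelicot. cring. Qed.
Lemma fmul_fscal_l {K : Type} c (y w : K -> C) : fmul (fscal c y) w = fscal c (fmul y w).
Proof. apply functional_extensionality. intro k. unfold fmul, fscal. to_coquelicot. cring. Qed.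
Lemma fmul_fscal_r {K : Type} c (y w : K -> C) : fmul w (fscal c y) = fscal c (fmul w y).
Proof. apply functional_extensionality. intro k. unfold fmul, fscal. to_coquelicot. cring. Qed.

Section Multilinear.
Context {K : Type} (T : topology K).

Definition bcont (c : K -> C) : Prop := cont T c /\ exists r, 0 <= r /\ normle c r.

Lemma ml_zero n : cmultilinear T n (fun _ => C0).
Proof.
  split; [|split; [|split]]; auto; intros; to_coquelicot; try cring.
  exists 0. intros. rewrite Cmod_0. lra.
Qed.

Lemma ml_fix_first n A c : cmultilinear T (S n) A -> bcont c ->
  cmultilinear T n (fun zs => A (cons_f c zs)).
Proof.
  intros [H1 [H2 [H3 [M HM]]]] [Hc [r [Hr Hn]]]. split; [|split; [|split]].
  - intros xs ys E. apply H1. intros i Hi. destruct i; simpl; auto. apply E. lia.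
  - intros xs i y z Hx Hy Hz Hi. rewrite !cons_f_upd.
    apply H2; auto; [intros [|j]; simpl; auto | lia].
  - intros xs i c' y Hx Hy Hi. rewrite !cons_f_upd.
    apply H3; auto; [intros [|j]; simpl; auto | lia].
  - exists (M * r). intros xs rs H. specialize (HM (cons_f c xs) (rcons r rs)).
    rewrite Rprod_cons in HM. rewrite Rmult_assoc. apply HM.
    intros [|i] Hi; simpl; auto. apply H. lia.
Qed.

Definition merge_first (n : nat) (zs : nat -> K -> C) : nat -> K -> C :=
  upd zs O (fmul (zs O) (zs (S n))).

Lemma merge_first_upd0 n zs w :
  merge_first n (upd zs O w) = upd (merge_first n zs) O (fmul w (zs (S n))).
Proof. unfold merge_first. rewrite !upd_upd, upd_eq, upd_neq by lia. reflexivity. Qed.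

Lemma merge_first_upd_last n zs w j : (j < S n)%nat ->
  merge_first n (upd zs (S n) w) j = upd zs O (fmul (zs O) w) j.
Proof.
  intros Hj. unfold merge_first, upd. rewrite Nat.eqb_refl.
  destruct (Nat.eqb_spec j O); [reflexivity|]. destruct (Nat.eqb_spec j (S n)); [lia | reflexivity].
Qed.

Lemma merge_first_upd_mid n zs w i : (0 < i < S n)%nat ->
  merge_first n (upd zs i w) = upd (merge_first n zs) i w.
Proof. intros. unfold merge_first. rewrite !(upd_neq zs i) by lia. apply upd_comm. lia. Qed.

Lemma cont_merge_first n xs : (forall j, cont T (xs j)) -> forall j, cont T (merge_first n xs j).
Proof. intros Hx j. unfold merge_first, upd. destruct (Nat.eqb j O); auto. apply cont_fmul; auto. Qed.

Lemma ml_merge n A : cmultilinear T (S n) A -> cmultilinear T (S (S n)) (fun zs => A (merge_first n zs)).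
Proof.
  intros [H1 [H2 [H3 [M HM]]]].
  assert (Hlast : forall xs w, A (merge_first n (upd xs (S n) w)) = A (upd xs O (fmul (xs O) w)))
    by (intros; apply H1; intros; apply merge_first_upd_last; auto).
  split; [|split; [|split]].
  - intros xs ys E. apply H1. intros i Hi. unfold merge_first, upd, fmul.
    destruct (Nat.eqb i O); rewrite ?(E O), ?(E (S n)), ?E by lia; reflexivity.
  - intros xs i y z Hx Hy Hz Hi.
    destruct (Nat.eq_dec i O); [|destruct (Nat.eq_dec i (S n))]; subst.
    + rewrite !merge_first_upd0, fmul_fadd_l. apply H2; auto using cont_fmul, cont_merge_first; lia.
    + rewrite !Hlast, fmul_fadd_r. apply H2; auto using cont_fmul; lia.
    + rewrite !merge_first_upd_mid by lia. apply H2; auto using cont_merge_first; lia.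
  - intros xs i c y Hx Hy Hi.
    destruct (Nat.eq_dec i O); [|destruct (Nat.eq_dec i (S n))]; subst.
    + rewrite !merge_first_upd0, fmul_fscal_l. apply H3; auto using cont_fmul, cont_merge_first; lia.
    + rewrite !Hlast, fmul_fscal_r. apply H3; auto using cont_fmul; lia.
    + rewrite !merge_first_upd_mid by lia. apply H3; auto using cont_merge_first; lia.
  - (* the merged slot has radius [rs 0 * rs (n+1)] *)
    exists M. intros xs rs H. specialize (HM (merge_first n xs) (upd rs O (rs O * rs (S n)))).
    rewrite Rprod_upd_mul in HM by lia. apply HM. intros i Hi. unfold merge_first.
    destruct (Nat.eq_dec i O) as [->|Hi0]; [rewrite !upd_eq | rewrite !upd_neq by lia; apply H; lia].
    destruct (H O ltac:(lia)) as [Hc0 [Hr0 Hn0]]. destruct (H (S n) ltac:(lia)) as [Hc1 [Hr1 Hn1]].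
    split; [apply cont_fmul; auto | split; [apply Rmult_le_pos; auto|]].
    intro k. unfold fmul. to_coquelicot. rewrite Cmod_mult. apply Rmult_le_compat; auto using Cmod_ge_0.
Qed.

Lemma ml_add n A B : cmultilinear T n A -> cmultilinear T n B ->
  cmultilinear T n (fun xs => Cadd (A xs) (B xs)).
Proof.
  intros [A1 [A2 [A3 [MA HA]]]] [B1 [B2 [B3 [MB HB]]]]. split; [|split; [|split]].
  - intros xs ys E. rewrite (A1 xs ys), (B1 xs ys); auto.
  - intros. rewrite A2, B2 by auto. to_coquelicot. cring.
  - intros. rewrite A3, B3 by auto. to_coquelicot. cring.
  - exists (MA + MB). intros xs rs H. to_coquelicot. rewrite Rmult_plus_distr_r.
    eapply Rle_trans; [apply Cmod_triangle|]. apply Rplus_le_compat; [apply HA | apply HB]; auto.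
Qed.

Lemma ml_vanish n A xs i : cmultilinear T n A -> (forall j, cont T (xs j)) -> (i < n)%nat ->
  (forall k, xs i k = C0) -> A xs = C0.
Proof.
  intros [_ [_ [Hsc _]]] Hx Hi H0.
  replace xs with (upd xs i (fscal C0 (xs i))).
  - rewrite (Hsc xs i C0 (xs i)) by auto. to_coquelicot. cring.
  - apply functional_extensionality. intro j. unfold upd. destruct (Nat.eqb_spec j i); [subst|auto].
    apply functional_extensionality. intro k. unfold fscal. rewrite H0. to_coquelicot. cring.
Qed.

Lemma ml_slot_sub n A xs i y z : cmultilinear T n A -> (forall j, cont T (xs j)) ->
  cont T y -> cont T z -> (i < n)%nat ->
  Csub (A (upd xs i y)) (A (upd xs i z)) = A (upd xs i (fsub y z)).
Proof.
  intros [_ [H2 _]] Hx Hy Hz Hi.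
  replace y with (fadd z (fsub y z)) at 1
    by (apply functional_extensionality; intro k; unfold fadd, fsub; to_coquelicot; cring).
  rewrite H2; auto using cont_fsub. to_coquelicot. cring.
Qed.

Lemma ml_one_small_slot n A rho : cmultilinear T n A -> 0 <= rho -> exists M, 0 <= M /\
  forall xs i v eta, (i < n)%nat -> (forall j, cont T (xs j)) -> cont T v -> 0 <= eta ->
  (forall j, (j < n)%nat -> normle (xs j) rho) -> normle v eta -> Cmod (A (upd xs i v)) <= M * eta.
Proof.
  intros [_ [_ [_ [MA HM]]]] Hrho. set (Mp := Rmax MA 0).
  assert (HMp : 0 <= Mp) by apply Rmax_r. assert (Hp : 0 <= rho ^ (n - 1)) by (apply pow_le; lra).
  exists (Mp * rho ^ (n - 1)). split; [nra|].
  intros xs i v eta Hi Hx Hv He Hxb Hvb.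
  eapply Rle_trans; [apply (HM _ (upd (fun _ => rho) i eta))|].
  - intros j Hj. destruct (Nat.eq_dec j i) as [->|Hji]; [rewrite !upd_eq; auto|].
    rewrite !upd_neq by auto. auto.
  - rewrite Rprod_upd_const by auto.
    apply Rle_trans with (Mp * (eta * rho ^ (n - 1))); [apply Rmult_le_compat_r; [nra | apply Rmax_l]|].
    right. ring.
Qed.

Definition mix_args (k : nat) (xs ys : nat -> K -> C) : nat -> K -> C :=
  fun j => if Nat.ltb j k then ys j else xs j.

Lemma mix_args_step k xs ys : mix_args k xs ys = upd (mix_args (S k) xs ys) k (xs k) /\
                              mix_args (S k) xs ys = upd (mix_args (S k) xs ys) k (ys k).
Proof.
  split; apply functional_extensionality; intro j; unfold upd, mix_args;
    destruct (Nat.eqb_spec j k), (Nat.ltb_spec j k), (Nat.ltb_spec j (S k)); subst; auto; lia.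
Qed.

(** Telescoping replaces the arguments one at a time. *)
Lemma ml_lipschitz n A rho : cmultilinear T n A -> 0 <= rho -> exists M, 0 <= M /\
  forall xs ys eta, (forall j, cont T (xs j) /\ cont T (ys j)) -> 0 <= eta ->
  (forall i, (i < n)%nat ->
     normle (xs i) rho /\ normle (ys i) rho /\ normle (fsub (xs i) (ys i)) eta) ->
  Cmod (Csub (A xs) (A ys)) <= M * eta.
Proof.
  intros HA Hrho. destruct (ml_one_small_slot n A rho HA Hrho) as [M [HM0 HM]].
  exists (INR n * M). split; [apply Rmult_le_pos; [apply pos_INR | auto]|].
  intros xs ys eta Hc He Hb. set (mix := fun k => mix_args k xs ys).
  assert (Hmc : forall k j, cont T (mix k j))
    by (intros; unfold mix, mix_args; destruct (Nat.ltb j k); apply Hc).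
  assert (Hstep : forall k, (k < n)%nat -> Cmod (Csub (A (mix k)) (A (mix (S k)))) <= M * eta).
  { intros k Hk. destruct (mix_args_step k xs ys) as [Ek ESk].
    assert (Ed : Csub (A (mix k)) (A (mix (S k))) = A (upd (mix (S k)) k (fsub (xs k) (ys k)))).
    { rewrite <- (ml_slot_sub n); auto; try apply Hc. f_equal; f_equal; assumption. }
    rewrite Ed. apply HM; auto; [apply cont_fsub; apply Hc | | apply Hb; auto].
    intros j Hj. unfold mix, mix_args. destruct (Nat.ltb j (S k)); apply Hb; auto. }
  assert (Htel : forall k, (k <= n)%nat -> Cmod (Csub (A xs) (A (mix k))) <= INR k * M * eta).
  { induction k; intros Hk.
    - replace (mix O) with xs by (apply functional_extensionality; intro j; reflexivity).
      to_coquelicot. replace (A xs - A xs)%C with (RtoC 0) by ring. rewrite Cmod_0. simpl. lra.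
    - specialize (Hstep k ltac:(lia)). specialize (IHk ltac:(lia)). to_coquelicot.
      replace (A xs - A (mix (S k)))%C
        with ((A xs - A (mix k)) + (A (mix k) - A (mix (S k))))%C by ring.
      eapply Rle_trans; [apply Cmod_triangle|]. rewrite S_INR. lra. }
  replace (A ys) with (A (mix n)); [apply Htel; lia|].
  destruct HA as [H1 _]. apply H1. intros i Hi. unfold mix, mix_args.
  destruct (Nat.ltb_spec i n); auto; lia.
Qed.

End Multilinear.

(** ** Continuous polynomials *)

Lemma Csum_ext N f g : (forall n, (n < N)%nat -> f n = g n) -> Csum N f = Csum N g.
Proof. induction N; simpl; intros; auto. rewrite IHN, H by (intros; try apply H; lia). auto. Qed.

Lemma Csum_zero N : Csum N (fun _ => C0) = C0.
Proof. induction N; simpl; auto. rewrite IHN. to_coquelicot. cring. Qed.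

Lemma Csum_add N f g : Csum N (fun j => Cadd (f j) (g j)) = Cadd (Csum N f) (Csum N g).
Proof. induction N; simpl; to_coquelicot; [cring|]. rewrite IHN. cring. Qed.

Lemma Csum_shift n f : Csum (S n) f = Cadd (f O) (Csum n (fun t => f (S t))).
Proof. induction n; simpl in *; to_coquelicot; [cring|]. rewrite IHn. cring. Qed.

Lemma Csum_app N M f : Csum (N + M) f = Cadd (Csum N f) (Csum M (fun n => f (N + n)%nat)).
Proof.
  induction M; simpl; to_coquelicot; [rewrite Nat.add_0_r; cring|].
  rewrite Nat.add_succ_r. simpl. rewrite IHM. to_coquelicot. cring.
Qed.

Lemma Csum_mul_l z n f : Cmul z (Csum n f) = Csum n (fun t => Cmul z (f t)).
Proof. induction n; simpl; to_coquelicot; [cring|]. rewrite <- IHn. to_coquelicot. cring. Qed.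

Section Polynomials.
Context {K : Type} (T : topology K).

Lemma cpoly_ext (P Q : (K -> C) -> C) : (forall x, cont T x -> P x = Q x) -> cpoly T Q -> cpoly T P.
Proof. intros E [N [A [HA HQ]]]. exists N, A. split; auto. intros x Hx. rewrite E, HQ; auto. Qed.

Lemma cpoly_hom n A : cmultilinear T n A -> cpoly T (fun x => A (fun _ => x)).
Proof.
  intros HA. exists (S n), (fun j => if Nat.eqb j n then A else (fun _ => C0)). split.
  - intro j. destruct (Nat.eqb_spec j n); [subst; auto | apply ml_zero].
  - intros x Hx. simpl. rewrite Nat.eqb_refl, (Csum_ext n _ (fun _ => C0)).
    + rewrite Csum_zero. to_coquelicot. cring.
    + intros j Hj. destruct (Nat.eqb_spec j n); [lia | auto].
Qed.

Lemma cpoly_zero : cpoly T (fun _ => C0).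
Proof. exact (cpoly_hom 0 _ (ml_zero T 0)). Qed.

Lemma cpoly_add P Q : cpoly T P -> cpoly T Q -> cpoly T (fun x => Cadd (P x) (Q x)).
Proof.
  intros [N [A [HA HP]]] [M [B [HB HQ]]].
  (* pad both sums with zero forms up to length [N + M] and add them degreewise *)
  set (pad := fun (L : nat) (F : nat -> (nat -> K -> C) -> C) (j : nat) =>
                if Nat.ltb j L then F j else (fun _ : nat -> K -> C => C0)).
  assert (Hpad : forall L F x, (L <= N + M)%nat ->
            Csum (N + M) (fun j => pad L F j (fun _ => x)) = Csum L (fun j => F j (fun _ => x))).
  { intros L F x HL. replace (N + M)%nat with (L + (N + M - L))%nat by lia.
    rewrite Csum_app, (Csum_ext (N + M - L) _ (fun _ => C0)), Csum_zero.
    - to_coquelicot. rewrite Cplus_0_r. apply Csum_ext. intros j Hj.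
      unfold pad. destruct (Nat.ltb_spec j L); [auto | lia].
    - intros j Hj. unfold pad. destruct (Nat.ltb_spec (L + j) L); [lia | auto]. }
  exists (N + M)%nat, (fun j xs => Cadd (pad N A j xs) (pad M B j xs)). split.
  - intro j. apply ml_add; unfold pad;
      [destruct (Nat.ltb j N) | destruct (Nat.ltb j M)]; auto using ml_zero.
  - intros x Hx. rewrite HP, HQ by auto. rewrite <- (Hpad N A), <- (Hpad M B) by lia.
    symmetry.
    exact (Csum_add (N + M) (fun j => pad N A j (fun _ => x)) (fun j => pad M B j (fun _ => x))).
Qed.

Definition pslot (n : nat) (c : nat -> K -> C) (x : K -> C) : K -> C :=
  fun k => Csum n (fun t => Cmul (c t k) (Cpow (x k) t)).

Definition pfam (m : nat) (ns : nat -> nat) (dd : nat -> nat -> K -> C) (x : K -> C) :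
  nat -> K -> C := fun i => if Nat.ltb i m then pslot (ns i) (dd i) x else x.

Lemma cont_pslot n c x : (forall t, cont T (c t)) -> cont T x -> cont T (pslot n c x).
Proof.
  intros Hc Hx. unfold pslot. induction n; simpl; [apply cont_const|].
  apply (cont_add T (fun k => Csum n (fun t => Cmul (c t k) (Cpow (x k) t)))); auto.
  apply cont_mul; auto. apply cont_pow; auto.
Qed.

Lemma cont_pfam m ns dd x : (forall i t, cont T (dd i t)) -> cont T x ->
  forall i, cont T (pfam m ns dd x i).
Proof. intros Hd Hx i. unfold pfam. destruct (Nat.ltb i m); auto. apply cont_pslot; auto. Qed.

Lemma pslot_S n c x : pslot (S n) c x = fadd (c O) (fmul (pslot n (fun t => c (S t)) x) x).
Proof.
  apply functional_extensionality. intro k. unfold pslot, fadd, fmul.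
  rewrite Csum_shift. f_equal; [simpl; to_coquelicot; cring|].
  rewrite Cmul_Cmult, Cmult_comm, <- Cmul_Cmult, Csum_mul_l.
  apply Csum_ext. intros t _. simpl. to_coquelicot. cring.
Qed.

(** Expanding slot [0] by the Horner step splits [A(pfam ...)] into a form with slot [0]
    frozen to the constant coefficient, plus a form with one more argument [x] merged
    into the shortened slot [0]. *)
Lemma pfam_horner m k A ns dd n x : cmultilinear T (S m + k) A ->
  (forall i t, cont T (dd i t)) -> ns O = S n -> cont T x ->
  A (pfam (S m) ns dd x) =
  Cadd (A (cons_f (dd O O) (pfam m (fun i => ns (S i)) (fun i => dd (S i)) x)))
       (A (merge_first (m + k) (pfam (S m) (upd ns O n) (upd dd O (fun t => dd O (S t))) x))).
Proof.
  intros [H1 [Hadd _]] Hd Hn Hx. set (F := pfam (S m) ns dd x).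
  set (Q := pslot n (fun t => dd O (S t)) x).
  assert (Efrozen : cons_f (dd O O) (pfam m (fun i => ns (S i)) (fun i => dd (S i)) x)
                    = upd F O (dd O O)).
  { apply functional_extensionality. intros [|i];
      [rewrite upd_eq | rewrite upd_neq by lia]; reflexivity. }
  assert (Emerged : A (merge_first (m + k) (pfam (S m) (upd ns O n) (upd dd O (fun t => dd O (S t))) x))
                    = A (upd F O (fmul Q x))).
  { apply H1. intros i Hi. unfold merge_first, upd, pfam, F, Q. simpl.
    destruct (Nat.eqb_spec i O) as [->|]; [|reflexivity]. simpl.
    destruct (Nat.ltb_spec (S (m + k)) (S m)); [lia | reflexivity]. }
  assert (E0 : F O = fadd (dd O O) (fmul Q x)) by (unfold F, pfam; simpl; rewrite Hn; apply pslot_S).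
  rewrite Efrozen, Emerged, <- Hadd;
    [| unfold F; apply cont_pfam; auto | auto | apply cont_fmul; [apply cont_pslot|]; auto | lia].
  rewrite <- E0, upd_id. reflexivity.
Qed.

(** A continuous multilinear form evaluated at pointwise polynomials with bounded
    continuous coefficients is a continuous polynomial: induction on the number [m] of
    polynomial slots and, inside, on the number of coefficients of slot [0], using the
    Horner splitting. *)
Lemma cpoly_pfam m : forall k A ns dd, cmultilinear T (m + k) A ->
  (forall i t, bcont T (dd i t)) -> cpoly T (fun x => A (pfam m ns dd x)).
Proof.
  induction m as [|m IHm]; intros k A ns dd HA Hd.
  { apply (cpoly_ext _ (fun x => A (fun _ => x))); [reflexivity | apply (cpoly_hom k); auto]. }
  assert (Hdc : forall i t, cont T (dd i t)) by (intros; apply Hd).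
  remember (ns O) as n eqn:Hn. revert k A ns dd HA Hd Hdc Hn.
  induction n as [|n IHn]; intros k A ns dd HA Hd Hdc Hn.
  - (* slot [0] is the empty sum, so the form vanishes *)
    apply (cpoly_ext _ (fun _ => C0)); [| apply cpoly_zero].
    intros x Hx. apply (ml_vanish T _ _ _ O HA); [apply cont_pfam; auto | lia|].
    intro k'. unfold pfam, pslot. simpl. rewrite <- Hn. reflexivity.
  - apply (cpoly_ext _ (fun x => Cadd
              (A (cons_f (dd O O) (pfam m (fun i => ns (S i)) (fun i => dd (S i)) x)))
              (A (merge_first (m + k) (pfam (S m) (upd ns O n) (upd dd O (fun t => dd O (S t))) x)))));
      [intros; apply (pfam_horner m k); auto|].
    apply cpoly_add.
    + apply (IHm k (fun zs => A (cons_f (dd O O) zs))); auto. apply ml_fix_first; auto.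
    + apply (IHn (S k) (fun zs => A (merge_first (m + k) zs))).
      * replace (S m + S k)%nat with (S (S (m + k))) by lia. apply ml_merge. auto.
      * intros [|i] t; [rewrite upd_eq | rewrite upd_neq by lia]; apply Hd.
      * intros [|i] t; [rewrite upd_eq | rewrite upd_neq by lia]; apply Hdc.
      * rewrite upd_eq. reflexivity.
Qed.

End Polynomials.

(** ** Nets *)

Section Nets.
Context {D : Type} (le : D -> D -> Prop) (Hdir : directed le).

Lemma net_lim_ext (z z' : D -> C) l l' :
  (forall d, z d = z' d) -> l = l' -> net_lim le z' l' -> net_lim le z l.
Proof.
  intros E1 E2 H eps He. destruct (H eps He) as [a0 Ha]. exists a0. intros. rewrite E1, E2. auto.
Qed.

Lemma net_lim_const l : net_lim le (fun _ => l) l.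
Proof.
  intros eps He. destruct Hdir as [[d _] _]. exists d. intros. to_coquelicot.
  replace (l - l)%C with (RtoC 0) by ring. rewrite Cmod_0. auto.
Qed.

Lemma net_lim_add z1 z2 l1 l2 : net_lim le z1 l1 -> net_lim le z2 l2 ->
  net_lim le (fun d => Cadd (z1 d) (z2 d)) (Cadd l1 l2).
Proof.
  intros H1 H2 eps He. destruct Hdir as [_ [_ [Htr Hub]]].
  destruct (H1 (eps / 2)) as [a1 Ha1]; [lra|]. destruct (H2 (eps / 2)) as [a2 Ha2]; [lra|].
  destruct (Hub a1 a2) as [c [Hc1 Hc2]]. exists c. intros a Ha.
  specialize (Ha1 a (Htr _ _ _ Hc1 Ha)). specialize (Ha2 a (Htr _ _ _ Hc2 Ha)). to_coquelicot.
  replace (z1 a + z2 a - (l1 + l2))%C with ((z1 a - l1) + (z2 a - l2))%C by ring.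
  eapply Rle_lt_trans; [apply Cmod_triangle|]. lra.
Qed.

Lemma net_lim_Csum N z l : (forall n, net_lim le (z n) (l n)) ->
  net_lim le (fun d => Csum N (fun n => z n d)) (Csum N l).
Proof.
  intros H. induction N; simpl; [apply net_lim_const|].
  apply (net_lim_add (fun d => Csum N (fun n => z n d)) (z N)); auto.
Qed.

Lemma net_lim_approx z l : (forall eps, 0 < eps -> exists z' l',
    (forall d, Cmod (Csub (z d) (z' d)) <= eps) /\ Cmod (Csub l l') <= eps /\ net_lim le z' l') ->
  net_lim le z l.
Proof.
  intros H eps He. destruct (H (eps / 3)) as [z' [l' [H1 [H2 H3]]]]; [lra|].
  destruct (H3 (eps / 3)) as [a0 Ha0]; [lra|]. exists a0. intros a Ha. specialize (Ha0 a Ha).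
  specialize (H1 a). to_coquelicot.
  replace (z a - l)%C with ((z a - z' a) + (z' a - l') - (l - l'))%C by ring.
  eapply Rle_lt_trans; [apply Cmod_sub_le|].
  pose proof (Cmod_triangle (z a - z' a) (z' a - l')). lra.
Qed.

End Nets.

(** ** [Phi_a] preserves polynomial-star convergence *)

Section PolyStar.
Context {K : Type} (T : topology K).

Definition mob_series (a : K -> C) (N : nat) (x : K -> C) : K -> C :=
  pslot (S N) (fun t k => mpt_coef (a k) t) x.

Lemma bcont_mpt_coef a t : inB T a -> bcont T (fun k => mpt_coef (a k) t).
Proof.
  intros Ha. pose proof (inB_cont T a Ha) as Hac. pose proof (inB_le1 T a Ha) as Ha1.
  destruct t as [|j]; simpl.
  - split; auto. exists 1. split; [lra | intro k; apply Ha1].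
  - split.
    + apply (cont_mul T (fun k => dil (a k)) (fun k => (- Cconj (a k)) ^ j)%C); [apply cont_dil; auto|].
      apply (cont_pow T (fun k => - Cconj (a k))%C), (cont_opp T (fun k => Cconj (a k))).
      apply cont_conj; auto.
    + exists 2. split; [lra|]. intro k. to_coquelicot. rewrite Cmod_mult, Cmod_pow, Cmod_opp, Cmod_conj.
      pose proof (Cmod_dil (a k) (Ha1 k)). pose proof (Cmod_ge_0 (a k)).
      pose proof (Cmod_ge_0 (dil (a k))).
      assert (Cmod (a k) ^ j <= 1) by (apply pow_le_one; split; [| apply Ha1]; auto).
      assert (0 <= Cmod (a k) ^ j) by (apply pow_le; auto). nra.
Qed.

Lemma mob_series_zero a N : mob_series a N fzero = a.
Proof. apply functional_extensionality. intro k. apply mpt_series_0. Qed.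

Lemma mob_series_uniform a eta : inB T a -> 0 < eta -> exists N,
  forall x, inB T x -> forall k, Cmod (mob a x k - mob_series a N x k) <= eta.
Proof.
  intros Ha Heta. destruct (inB_radius T a Ha) as [ra [Hra Hna]].
  destruct (pow_lt_1_zero ra ltac:(rewrite Rabs_right; lra) (eta * (1 - ra) / 2)) as [N HN].
  { apply Rdiv_lt_0_compat; [apply Rmult_lt_0_compat|]; lra. }
  specialize (HN N (Nat.le_refl N)). rewrite Rabs_right in HN by (apply Rle_ge, pow_le; lra).
  exists N. intros x Hx k.
  eapply Rle_trans; [apply (mpt_series_error _ _ _ ra); auto; [lra | apply (inB_le1 T x Hx)]|].
  apply Rmult_le_reg_r with (1 - ra); [lra|].
  replace (2 * ra ^ N / (1 - ra) * (1 - ra)) with (2 * ra ^ N) by (field; lra). lra.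
Qed.

Context {D : Type} (le : D -> D -> Prop) (Hdir : directed le) (g : D -> K -> C)
  (HgB : forall d, inB T (g d))
  (Hpoly : forall P, cpoly T P -> net_lim le (fun d => P (g d)) (P fzero)).

Lemma net_lim_form_series a n A N : inB T a -> cmultilinear T n A ->
  net_lim le (fun d => A (fun _ => mob_series a N (g d))) (A (fun _ => a)).
Proof.
  intros Ha HA. set (dd := fun (_ t : nat) (k : K) => mpt_coef (a k) t).
  assert (Hq : forall x, A (fun _ => mob_series a N x) = A (pfam n (fun _ => S N) dd x)).
  { intro x. destruct HA as [H1 _]. apply H1. intros i Hi. unfold pfam.
    destruct (Nat.ltb_spec i n); [reflexivity | lia]. }
  apply (net_lim_ext le _ (fun d => A (pfam n (fun _ => S N) dd (g d)))
                       _ (A (pfam n (fun _ => S N) dd fzero))).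
  - intro d. apply Hq.
  - rewrite <- Hq, mob_series_zero. reflexivity.
  - apply (Hpoly (fun x => A (pfam n (fun _ => S N) dd x))).
    apply (cpoly_pfam T n 0); [rewrite Nat.add_0_r; auto | intros; apply bcont_mpt_coef; auto].
Qed.

(** Each homogeneous part: [A(Phi_a(g_d),...) -> A(a,...)], since [Phi_a] is uniformly
    approximated by its truncated series and [A] is Lipschitz on bounded sets. *)
Lemma net_lim_form_mob a n A : inB T a -> cmultilinear T n A ->
  net_lim le (fun d => A (fun _ => mob a (g d))) (A (fun _ => a)).
Proof.
  intros Ha HA. destruct (ml_lipschitz T n A 2 HA ltac:(lra)) as [M [HM0 HMd]].
  apply net_lim_approx; auto. intros eps He.
  set (eta := Rmin 1 (eps / (M + 1))).
  assert (Heta : 0 < eta) by (unfold eta; apply Rmin_case; [lra | apply Rdiv_lt_0_compat; lra]).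
  assert (Heta1 : eta <= 1) by apply Rmin_l.
  assert (HMeta : M * eta <= eps).
  { apply Rle_trans with (M * (eps / (M + 1))); [apply Rmult_le_compat_l; [auto | apply Rmin_r]|].
    apply Rmult_le_reg_r with (M + 1); [lra|].
    replace (M * (eps / (M + 1)) * (M + 1)) with (M * eps) by (field; lra). nra. }
  destruct (mob_series_uniform a eta Ha Heta) as [N HN].
  exists (fun d => A (fun _ => mob_series a N (g d))), (A (fun _ => a)). split; [|split].
  - intro d. eapply Rle_trans; [|apply HMeta]. apply HMd; [| lra |].
    + intro j. split; [apply inB_cont, inB_mob; auto|].
      apply cont_pslot; [intro t; apply bcont_mpt_coef; auto | apply inB_cont; auto].
    + intros i Hi. pose proof (HN (g d) (HgB d)) as Hk.
      pose proof (inB_le1 T _ (inB_mob T a (g d) Ha (HgB d))) as Hm1.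
      split; [|split]; intro k; specialize (Hk k); specialize (Hm1 k); unfold fsub; to_coquelicot;
        [lra | | auto].
      pose proof (Cmod_rev (mob_series a N (g d) k) (mob a (g d) k)) as Hr.
      rewrite Cmod_sub_sym in Hr. lra.
  - to_coquelicot. replace (A (fun _ => a) - A (fun _ => a))%C with (RtoC 0) by ring.
    rewrite Cmod_0. lra.
  - apply (net_lim_form_series a n A N); auto.
Qed.

Lemma net_lim_cpoly_mob a P : inB T a -> cpoly T P -> net_lim le (fun d => P (mob a (g d))) (P a).
Proof.
  intros Ha [N [A [HA HP]]].
  apply (net_lim_ext le _ (fun d => Csum N (fun n => A n (fun _ => mob a (g d))))
                       _ (Csum N (fun n => A n (fun _ => a)))).
  - intro d. apply HP, inB_cont, inB_mob; auto.
  - apply HP, inB_cont; auto.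
  - apply (net_lim_Csum le Hdir N (fun n d => A n (fun _ => mob a (g d)))).
    intro n. apply (net_lim_form_mob a n); auto.
Qed.

End PolyStar.

Theorem corollary3p4 (K : Type) (T : topology K)
    (HK : top_compact T) (HH : top_hausdorff T) :
  (forall psi, Hinf T psi ->
     forall tau, Mfib T fzero tau -> Cl T psi fzero (tau psi)) <->
  (forall f0, inB T f0 -> forall psi, Hinf T psi ->
     forall tau, Mfib T f0 tau -> Cl T psi f0 (tau psi)).
Proof.
  split.
  - intros Hi f0 Hf0 psi Hpsi tau Htau.
    (* apply (i) to [psi o Phi_f0] and the transported functional *)
    destruct (Hi _ (Hinf_mob T f0 psi Hf0 Hpsi) _ (Mfib_mob T f0 tau Hf0 Htau))
      as [D [le [g [Hdir [HgB [Hpol Hlim]]]]]].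
    assert (Ev : tau (fun x => psi (mob f0 (mob (fneg f0) x))) = tau psi).
    { destruct Htau as [Hwd _]. symmetry. apply Hwd; auto. intros x Hx. rewrite (mob_inv T); auto. }
    (* the net [Phi_f0(g_d)] witnesses (ii) *)
    exists D, le, (fun d => mob f0 (g d)). split; [auto | split; [| split]].
    + intro d. apply inB_mob; auto.
    + intros P HP. apply (net_lim_cpoly_mob T le Hdir g HgB Hpol f0 P Hf0 HP).
    + rewrite <- Ev. exact Hlim.
  -
    intros Hii psi Hpsi tau Htau. apply Hii; auto. apply inB_zero.
Qed.
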